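(* Let $G$ be a countable group which is icc or torsion-free, and let $A$ be a finite set. Then every strongly irreducible subshift $Z\subseteq A^G$ containing a non-constant element is essentially free.
   Context: $A^G$ has the product topology and the action $(g\cdot z)(h)=z(hg)$; a subshift is a non-empty closed $G$-invariant subset. For finite $D\subseteq G$, two sets $E_1,E_2\subseteq G$ are $D$-apart if $DE_1\cap DE_2=\emptyset$. A subshift $Z$ is strongly irreducible if there is a finite $D\subseteq G$ such that for all finite $E_1,E_2\subseteq G$ that are $D$-apart and all $z_1,z_2\in Z$, there is $x\in Z$ with $x|_{E_i}=z_i|_{E_i}$ for $i=1,2$. A flow is essentially free if for every $g\neq e$ the set of points fixed by $g$ has empty interior. A group is icc if every non-identity element has infinite conjugacy class. *)

From Stdlib Require Import List Arith.
Import ListNotations.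


Record Group := {
  carrier :> Type;
  gmul : carrier -> carrier -> carrier;
  gone : carrier;
  ginv : carrier -> carrier;
  gmulA : forall x y z, gmul x (gmul y z) = gmul (gmul x y) z;
  gmul1l : forall x, gmul gone x = x;
  gmulVl : forall x, gmul (ginv x) x = gone
}.

Section Defs.
Variable G : Group.
Notation "x * y" := (gmul G x y).

Definition countable_type (T : Type) : Prop :=
  exists f : T -> nat, forall x y, f x = f y -> x = y.

Definition finite_type (T : Type) : Prop := exists l : list T, forall a, In a l.

Definition finite_set {T : Type} (S : T -> Prop) : Prop :=
  exists l : list T, forall x, S x -> In x l.

Fixpoint gpow (g : G) (n : nat) : G :=
  match n with 0 => gone G | S k => g * gpow g k end.

Definition conj_class (g : G) : G -> Prop :=
  fun x => exists h, x = h * (g * ginv G h).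

Definition icc : Prop :=
  forall g : G, g <> gone G -> ~ @finite_set G (conj_class g).

Definition torsion_free : Prop :=
  forall (g : G) (n : nat), g <> gone G -> 0 < n -> gpow g n <> gone G.

Variable A : Type.

Definition shift (g : G) (z : G -> A) : G -> A := fun h => z (h * g).

(* product topology on A^G (A discrete): U is open iff each point of U has
   a cylinder neighbourhood, determined by finitely many coordinates, inside U *)
Definition agree_on (F : list G) (x y : G -> A) : Prop :=
  forall h, In h F -> x h = y h.

Definition is_open (U : (G -> A) -> Prop) : Prop :=
  forall x, U x -> exists F : list G, forall y, agree_on F x y -> U y.

Definition is_closed (C : (G -> A) -> Prop) : Prop :=
  is_open (fun x => ~ C x).

Definition subshift (Z : (G -> A) -> Prop) : Prop :=
  (exists z, Z z) /\ is_closed Z /\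
  (forall g z, Z z -> Z (shift g z)).

Definition apart (D E1 E2 : list G) : Prop :=
  forall d1 e1 d2 e2, In d1 D -> In e1 E1 -> In d2 D -> In e2 E2 ->
    d1 * e1 <> d2 * e2.

Definition strongly_irreducible (Z : (G -> A) -> Prop) : Prop :=
  exists D : list G, forall E1 E2 : list G, apart D E1 E2 ->
    forall z1 z2, Z z1 -> Z z2 ->
      exists x, Z x /\ agree_on E1 x z1 /\ agree_on E2 x z2.

(* interior in the subspace topology of Z: V (subset of Z) has empty interior
   in Z iff every relatively open set U ∩ Z contained in V is empty *)
Definition empty_interior_in (Z V : (G -> A) -> Prop) : Prop :=
  forall U, is_open U -> (forall x, U x -> Z x -> V x) ->
    forall x, ~ (U x /\ Z x).

Definition fixed_in (Z : (G -> A) -> Prop) (g : G) : (G -> A) -> Prop :=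
  fun z => Z z /\ shift g z = z.

Definition essentially_free (Z : (G -> A) -> Prop) : Prop :=
  forall g : G, g <> gone G -> empty_interior_in Z (fixed_in Z g).

Definition nonconstant (z : G -> A) : Prop := exists h1 h2, z h1 <> z h2.

End Defs.

From Stdlib Require Import List Arith Lia FinFun Classical.
Import ListNotations.

(* Suppose g <> 1 fixes every point of a nonempty relatively open set, so it fixes every
   point of Z agreeing with some x on a finite window F. If D witnesses strong
   irreducibility and the site p g^n is D-apart from F ∪ {p}, glue x on F ∪ {p} with a
   point of Z differing from x at p g^n (it exists since Z contains a non-constant point
   and is shift invariant). The glued point is fixed by g, so its values at p and p g^n
   coincide, as they do for x: contradiction. Hence for all p and n, either
   p g^n p^-1 lies in D^-1 D or p g^n lies in D^-1 D F. For n = 1 this confines the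
   conjugacy class of g to a finite set, contradicting icc; for p = 1 it confines all
   powers of g to a finite set, contradicting torsion-freeness. *)

Section GroupFacts.
Variable G : Group.
Local Notation "x ⋅ y" := (gmul G x y) (at level 40, left associativity).
Local Notation e := (gone G).
Local Notation inv := (ginv G).

Lemma gmulVr (x : G) : x ⋅ inv x = e.
Proof.
  rewrite <- (gmul1l G (x ⋅ inv x)), <- (gmulVl G (inv x)) at 1.
  rewrite <- gmulA, (gmulA G (inv x) x (inv x)), gmulVl, gmul1l.
  apply gmulVl.
Qed.

Lemma gmul1r (x : G) : x ⋅ e = x.
Proof. rewrite <- (gmulVl G x), gmulA, gmulVr, gmul1l. reflexivity. Qed.

Lemma ginv1 : inv e = e.
Proof. rewrite <- (gmul1r (inv e)). apply gmulVl. Qed.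

Lemma gmulKV (x y : G) : x ⋅ y ⋅ inv y = x.
Proof. rewrite <- gmulA, gmulVr, gmul1r. reflexivity. Qed.

Lemma gmulVKr (x y : G) : x ⋅ inv y ⋅ y = x.
Proof. rewrite <- gmulA, gmulVl, gmul1r. reflexivity. Qed.

Lemma gmulVK (x y : G) : inv x ⋅ (x ⋅ y) = y.
Proof. rewrite gmulA, gmulVl, gmul1l. reflexivity. Qed.

Lemma gpowD (g : G) m n : gpow G g (m + n) = gpow G g m ⋅ gpow G g n.
Proof.
  induction m as [|m IHm]; simpl.
  - now rewrite gmul1l.
  - now rewrite IHm, gmulA.
Qed.

Lemma gpow_inj (g : G) : torsion_free G -> g <> e -> Injective (gpow G g).
Proof.
  intros Htf gne.
  assert (Hshift : forall m k, gpow G g m = gpow G g (m + k) -> k = 0).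
  { intros m [|k] Hm; [reflexivity|].
    exfalso; apply (Htf g (S k) gne); [lia|].
    rewrite gpowD in Hm.
    rewrite <- (gmulVK (gpow G g m) (gpow G g (S k))), <- Hm.
    apply gmulVl. }
  intros m n Hmn; destruct (le_lt_dec m n).
  - replace n with (m + (n - m)) in Hmn by lia; apply Hshift in Hmn; lia.
  - replace m with (n + (m - n)) in Hmn by lia; symmetry in Hmn.
    apply Hshift in Hmn; lia.
Qed.

Lemma gpow_not_all_in (g : G) (L : list G) : torsion_free G -> g <> e ->
  ~ (forall n, In (gpow G g n) L).
Proof.
  intros Htf gne Hall.
  assert (Hincl : incl (map (gpow G g) (seq 0 (S (length L)))) L).
  { intros y Hy; apply in_map_iff in Hy; destruct Hy as [n [<- _]]; apply Hall. }
  apply NoDup_incl_length in Hincl.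
  - rewrite length_map, length_seq in Hincl; lia.
  - apply Injective_map_NoDup; [apply gpow_inj; auto | apply seq_NoDup].
Qed.

Lemma conj_class_finite (g : G) (L M : list G) :
  (forall p, In (p ⋅ g ⋅ inv p) L \/ In (p ⋅ g) M) -> finite_set (conj_class G g).
Proof.
  intros Hcover.
  exists (L ++ map (fun c => c ⋅ inv g ⋅ g ⋅ inv (c ⋅ inv g)) M).
  intros y [p ->]; rewrite gmulA; apply in_or_app.
  destruct (Hcover p) as [HL | HM]; [now left|].
  right; apply in_map_iff; exists (p ⋅ g); split; [|exact HM].
  now rewrite gmulKV.
Qed.

Definition list_mul (L M : list G) : list G :=
  flat_map (fun a => map (fun b => a ⋅ b) M) L.

Lemma in_list_mul (L M : list G) a b : In a L -> In b M -> In (a ⋅ b) (list_mul L M).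
Proof.
  intros Ha Hb; apply in_flat_map; exists a; split; [exact Ha|].
  apply in_map_iff; exists b; auto.
Qed.

Definition quotient_set (D : list G) : list G := list_mul (map inv D) D.

Lemma apart_of_quotient_set (D E1 E2 : list G) :
  (forall e1 e2, In e1 E1 -> In e2 E2 -> ~ In (e2 ⋅ inv e1) (quotient_set D)) ->
  apart G D E1 E2.
Proof.
  intros Hq d1 e1 d2 e2 Hd1 He1 Hd2 He2 Heq.
  apply (Hq e1 e2 He1 He2).
  replace (e2 ⋅ inv e1) with (inv d2 ⋅ d1).
  - apply in_list_mul; [apply in_map|]; assumption.
  - now rewrite <- (gmulVK d2 e2), <- Heq, gmulA, gmulKV.
Qed.

End GroupFacts.

Section FixedCylinder.
Variables (G : Group) (A : Type).
Local Notation "x ⋅ y" := (gmul G x y) (at level 40, left associativity).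
Local Notation inv := (ginv G).

Lemma fixed_gpow (g : G) (y : G -> A) : shift G A g y = y ->
  forall n p, y (p ⋅ gpow G g n) = y p.
Proof.
  intros Hfix n; induction n as [|n IHn]; intro p; simpl.
  - now rewrite gmul1r.
  - rewrite gmulA, IHn. change (shift G A g y p = y p). now rewrite Hfix.
Qed.

Lemma nonconstant_shifts_avoid (Z : (G -> A) -> Prop) (z : G -> A) :
  (forall g y, Z y -> Z (shift G A g y)) -> Z z -> nonconstant G A z ->
  forall q a, exists u, Z u /\ u q <> a.
Proof.
  intros Zshift Zz [h1 [h2 Hh]] q a.
  assert (Hval : forall h, shift G A (inv q ⋅ h) z q = z h).
  { intro h; unfold shift; now rewrite gmulA, gmulVr, gmul1l. }
  destruct (classic (z h1 = a)) as [Ha | Ha].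
  - exists (shift G A (inv q ⋅ h2) z); split; [auto|]; rewrite Hval; congruence.
  - exists (shift G A (inv q ⋅ h1) z); split; [auto|]; now rewrite Hval.
Qed.

Variables (Z : (G -> A) -> Prop) (D F : list G) (g : G) (x : G -> A).
Hypothesis Zglue : forall E1 E2, apart G D E1 E2 -> forall z1 z2, Z z1 -> Z z2 ->
  exists y, Z y /\ agree_on G A E1 y z1 /\ agree_on G A E2 y z2.
Hypothesis Zx : Z x.
Hypothesis cylinder_fixed : forall y, agree_on G A F x y -> Z y -> shift G A g y = y.
Hypothesis Zavoid : forall q a, exists u, Z u /\ u q <> a.

Lemma fixed_cylinder_obstruction p n :
  In (p ⋅ gpow G g n ⋅ inv p) (quotient_set G D) \/
  In (p ⋅ gpow G g n) (list_mul G (quotient_set G D) F).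
Proof.
  set (q := p ⋅ gpow G g n).
  apply NNPP; intros Hnot.
  assert (Hapart : apart G D (F ++ [p]) [q]).
  { apply apart_of_quotient_set.
    intros e1 e2 He1 [<- | []] Hq; apply Hnot.
    apply in_app_or in He1; destruct He1 as [Hf | [<- | []]].
    - right; replace q with (q ⋅ inv e1 ⋅ e1) by apply gmulVKr.
      now apply in_list_mul.
    - now left. }
  destruct (Zavoid q (x q)) as [u [Zu Hu]].
  destruct (Zglue _ _ Hapart x u Zx Zu) as [y [Zy [Hyx Hyu]]].
  assert (Hy : shift G A g y = y).
  { apply cylinder_fixed; [|exact Zy].
    intros h Hh; symmetry; apply Hyx, in_or_app; now left. }
  assert (Hx : shift G A g x = x) by (apply cylinder_fixed; [intros h _|]; auto).
  apply Hu.
  rewrite <- (Hyu q) by now left.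
  unfold q; rewrite (fixed_gpow g y Hy), (fixed_gpow g x Hx).
  apply Hyx, in_or_app; right; now left.
Qed.

End FixedCylinder.

Theorem proposition5p5 (G : Group) (A : Type) :
  countable_type G -> (icc G \/ torsion_free G) -> finite_type A ->
  forall Z : (G -> A) -> Prop,
    subshift G A Z -> strongly_irreducible G A Z ->
    (exists z, Z z /\ nonconstant G A z) ->
    essentially_free G A Z.
Proof.
  intros _ Hgroup _ Z [_ [_ Zshift]] [D Zglue] [z [Zz Hz]] g gne U Uopen Ufix x [Ux Zx].
  destruct (Uopen x Ux) as [F HF].
  pose proof (fixed_cylinder_obstruction G A Z D F g x Zglue Zx
    (fun y Hxy Zy => proj2 (Ufix y (HF y Hxy) Zy))
    (nonconstant_shifts_avoid G A Z z Zshift Zz Hz)) as Hobstr.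
  destruct Hgroup as [Hicc | Htf].
  - apply (Hicc g gne), (conj_class_finite G g (quotient_set G D)
      (list_mul G (quotient_set G D) F)); intro p.
    specialize (Hobstr p 1); simpl in Hobstr; now rewrite gmul1r in Hobstr.
  - apply (gpow_not_all_in G g (quotient_set G D ++ list_mul G (quotient_set G D) F)
      Htf gne); intro n.
    destruct (Hobstr (gone G) n) as [Hn | Hn];
      rewrite gmul1l, ?ginv1, ?gmul1r in Hn; apply in_or_app; auto.
Qed.
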